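(* For every $n\ge 0$, the number of self-describing sequences in $\mathcal{A}_n$ (equivalently, the number of members of the Catalan family $\mathcal{C}$ of length $n+1$) equals the Catalan number $c_{n+1}$. Moreover, for each $r=0,\dots,n$, the number of self-describing sequences $(a_0,\dots,a_n)\in\mathcal{A}_n$ with last term $a_n=r$ equals $c_r c_{n-r}$.
   Context: $\mathcal{A}_n$ is the set of integer sequences $a=(a_0,\dots,a_n)$ with $0\le a_i\le i$ for all $i$. A sequence is self-describing if $\#\{j: j<i,\ a_j<a_i\}=a_i$ for every index $i$. The Catalan numbers are $c_m=\frac{1}{m+1}\binom{2m}{m}$. The Catalan family $\mathcal{C}$ is defined recursively together with, for each member $a$, a ''sibling list'' $L(a)$: $(0)\in\mathcal{C}$ with $L((0))=(0)$. If $a=(a_0,\dots,a_n)\in\mathcal{C}$ with $L(a)=(s_0,s_1,\dots,s_m)$ and $a_n=s_i$, then the children of $a$ are $(a_0,\dots,a_n,t)$ for $t\in\{s_0,\dots,s_i,n+1\}$, all in $\mathcal{C}$, each with sibling list $(s_0,\dots,s_i,n+1)$; $\mathcal{C}$ consists exactly of the sequences obtained this way. (Its members are exactly the self-describing sequences.) *)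

From mathcomp Require Import all_boot.
Set Implicit Arguments. Unset Strict Implicit. Unset Printing Implicit Defensive.

(* A sequence (a_0,...,a_n) with entries in {0..n} is represented as a
   finite function 'I_n.+1 -> 'I_n.+1 ; a_i <= i <= n so nothing is lost. *)

Definition inA (n : nat) (a : {ffun 'I_n.+1 -> 'I_n.+1}) : bool :=
  [forall i : 'I_n.+1, (a i <= i)%N].

Definition self_describing (n : nat) (a : {ffun 'I_n.+1 -> 'I_n.+1}) : bool :=
  [forall i : 'I_n.+1,
     #|[pred j : 'I_n.+1 | (j < i)%N && (a j < a i)%N]| == nat_of_ord (a i)].

(* Catalan numbers c_m = binom(2m, m) / (m+1) (exact division). *)
Definition catalan (m : nat) : nat := 'C(m.*2, m) %/ m.+1.

(* Splitting a self-describing sequence at its last entry [r] gives a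
   bijection with pairs of self-describing sequences of lengths [r] and
   [n - r]: the entries below [r] are exactly the first [r] ones, and the
   remaining ones, shifted down by [r], are again self-describing.  Hence the
   counts satisfy Segner's recurrence [c_(n+1) = \sum_r c_r c_(n-r)], which is
   proved for [catalan] from [(m+2) c_(m+1) = 2(2m+1) c_m] by evaluating
   [\sum_r (r+1) c_r c_(n+1-r)] in two ways. *)

From mathcomp Require Import all_boot zify.
Set Implicit Arguments. Unset Strict Implicit.

Lemma catalan_mul_succ m : catalan m * m.+1 = 'C(m.*2, m).
Proof.
have bin_step := mul_bin_left m.*2 m.
rewrite (_ : m.*2 - m = m) in bin_step; last by lia.
suff dvd_m1 : m.+1 %| 'C(m.*2, m) by rewrite /catalan divnK.
apply/dvdnP; exists ('C(m.*2, m) - 'C(m.*2, m.+1)).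
by move: bin_step; move: ('C(m.*2, m)) ('C(m.*2, m.+1)) => b b'; nia.
Qed.

Lemma catalan_succ m : catalan m.+1 * m.+2 = 2 * m.*2.+1 * catalan m.
Proof.
have c1 := catalan_mul_succ m.+1.
have c0 := catalan_mul_succ m.
have bin_diag := mul_bin_diag m.*2.+1 m; rewrite /= in bin_diag.
have bin_mid : 'C((m.+1).*2, m.+1) = 2 * 'C(m.*2.+1, m.+1).
  rewrite (_ : (m.+1).*2 = m.*2.+2); last by lia.
  have bin_sym : 'C(m.*2.+1, m) = 'C(m.*2.+1, m.+1).
    by rewrite -bin_sub; [congr 'C(_, _) | ]; lia.
  by rewrite binS bin_sym; lia.
apply/eqP; rewrite -(eqn_pmul2l (ltn0Sn m)); apply/eqP; nia.
Qed.

Definition catalan_conv n := \sum_(r < n.+1) catalan r * catalan (n - r).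

Definition catalan_conv_weighted n :=
  \sum_(r < n.+1) r * (catalan r * catalan (n - r)).

(* The substitution r |-> n - r leaves the convolution invariant. *)
Lemma catalan_conv_weighted_sym n :
  2 * catalan_conv_weighted n = n * catalan_conv n.
Proof.
have weighted_rev : catalan_conv_weighted n =
            \sum_(r < n.+1) (n - r) * (catalan r * catalan (n - r)).
  rewrite /catalan_conv_weighted (reindex_inj rev_ord_inj) /=.
  apply: eq_bigr => i _; have i_lt := ltn_ord i.
  by rewrite subSS (_ : n - (n - i) = i); lia.
rewrite mul2n -addnn {1}weighted_rev /catalan_conv big_distrr -big_split /=.
apply: eq_bigr => i _; have i_lt := ltn_ord i.
by rewrite -mulnDl; congr (_ * _); lia.
Qed.

Lemma catalan_conv_succ n : catalan_conv n = catalan n.+1.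
Proof.
elim: n => [|n IHn]; first by rewrite /catalan_conv big_ord1.
pose S := \sum_(r < n.+2) r.+1 * (catalan r * catalan (n.+1 - r)).
have S_weighted : S = catalan_conv_weighted n.+1 + catalan_conv n.+1.
  by rewrite /S -big_split /=; apply: eq_bigr => i _; lia.
have S_shift : S = catalan n.+1 + 4 * catalan_conv_weighted n + 2 * catalan_conv n.
  rewrite /S big_ord_recl /= subn0 mul1n.
  rewrite /catalan_conv_weighted /catalan_conv !big_distrr -!addnA -big_split /=.
  congr (_ + _); apply: eq_bigr => i _; rewrite /bump /= add1n subSS.
  by have := catalan_succ i; nia.
have sym1 := catalan_conv_weighted_sym n.+1.
have sym0 := catalan_conv_weighted_sym n.
have rec := catalan_succ n.+1.
by apply/eqP; rewrite -(eqn_pmul2l (ltn0Sn n.+2)); apply/eqP; nia.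
Qed.

Fixpoint sd_from (pre s : seq nat) : bool :=
  if s is x :: s' then (count (fun y => y < x) pre == x) && sd_from (rcons pre x) s'
  else true.

Definition sdseq s := sd_from [::] s.

Lemma sd_from_cat pre s1 s2 :
  sd_from pre (s1 ++ s2) = sd_from pre s1 && sd_from (pre ++ s1) s2.
Proof.
elim: s1 pre => [|x s1 IHs] pre /=; first by rewrite cats0.
by rewrite IHs cat_rcons andbA.
Qed.

Lemma sd_from_nth pre s : sd_from pre s =
  all (fun i => count (fun y => y < nth 0 s i) (pre ++ take i s) == nth 0 s i)
      (iota 0 (size s)).
Proof.
elim: s pre => [|x s IHs] pre //=.
rewrite cats0 IHs -(addn0 1) iotaDl all_map; congr (_ && _).
by apply: eq_all => i /=; rewrite cat_rcons.
Qed.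

(* [sdjoin r xs ys] is the sequence [xs, ys + r, r]: a self-describing
   sequence with last entry [r] is [xs] followed by a shifted copy of [ys]. *)
Definition sdjoin r xs ys := xs ++ map (addn r) ys ++ [:: r].

Lemma sd_from_shift pre q t r : all (fun y => y < r) pre -> size pre = r ->
  sd_from (pre ++ map (addn r) q) (map (addn r) t) = sd_from q t.
Proof.
move=> pre_lt size_pre; elim: t q => [|x t IHt] q //=.
rewrite rcons_cat -map_rcons IHt count_cat count_map; congr (_ && _).
have -> : count (fun y => y < r + x) pre = r.
  by rewrite -size_pre; apply/eqP; rewrite -all_count; apply: sub_all pre_lt => y /=; lia.
by rewrite eqn_add2l; congr (_ == _); apply: eq_count => y /=; lia.
Qed.

Section SelfDescribingSeq.

Variable s : seq nat.
Hypothesis sd_s : sdseq s.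

Lemma sdseq_count_take k : k < size s ->
  count (fun y => y < nth 0 s k) (take k s) = nth 0 s k.
Proof.
move: sd_s; rewrite /sdseq sd_from_nth => /allP sd_at k_lt.
by apply/eqP; apply: sd_at; rewrite mem_iota.
Qed.

Lemma sdseq_nth_le k : k < size s -> nth 0 s k <= k.
Proof.
move=> k_lt; rewrite -(sdseq_count_take k_lt).
by apply: leq_trans (count_size _ _) _; rewrite size_take; case: ifP => //; lia.
Qed.

Lemma sdseq_lt_size : all (fun y => y < size s) s.
Proof. by apply/(all_nthP 0) => j j_lt; have := sdseq_nth_le j_lt; lia. Qed.

Lemma sdseq_take k : sdseq (take k s).
Proof. by move: sd_s; rewrite /sdseq -{1}(cat_take_drop k s) sd_from_cat => /andP[]. Qed.

(* Since [s_j <= j], the first [v] entries of [s] are all smaller than [v]. *)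
Lemma sdseq_count_lt_take L v : L <= size s -> v <= L ->
  v <= count (fun y => y < v) (take L s).
Proof.
elim: L v => [|L IHL] v L_le v_le; first by case: v v_le.
rewrite (take_nth 0) // -cats1 count_cat.
case: (ltnP v L.+1) => v_L.
  exact: leq_trans (IHL v (ltnW L_le) v_L) (leq_addr _ _).
rewrite (_ : v = L.+1); last by lia.
have all_lt : all (fun y => y < L.+1) (take L s ++ [:: nth 0 s L]).
  rewrite cats1 -take_nth //; apply/(all_nthP 0) => j.
  rewrite size_takel // => j_lt; rewrite nth_take //.
  by have := sdseq_nth_le (leq_trans j_lt L_le); lia.
move: all_lt; rewrite all_count count_cat size_cat size_take L_le /=.
by move=> /eqP ->; rewrite addn1.
Qed.

(* Otherwise the first [s_n] entries (all below [s_n]) and [s_k] would give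
   [s_n + 1] entries below [s_n] before position [n]. *)
Lemma sdseq_lt_last_index n k : size s = n.+1 -> k < n ->
  nth 0 s k < nth 0 s n -> k < nth 0 s n.
Proof.
move=> size_s k_lt sk_lt; rewrite ltnNge; apply/negP => last_le.
set r := nth 0 s n in sk_lt last_le *.
have count_n : count (fun y => y < r) (take n s) = r.
  by apply: sdseq_count_take; rewrite size_s.
have count_k : r <= count (fun y => y < r) (take k s).
  by apply: sdseq_count_lt_take; rewrite // size_s; lia.
have count_k1 : count (fun y => y < r) (take k.+1 s) <= r.
  rewrite -[leqRHS]count_n -(cat_take_drop k.+1 (take n s)) take_takel // count_cat.
  exact: leq_addr.
move: count_k1; rewrite (take_nth 0) ?size_s; last by lia.
by rewrite -cats1 count_cat /= sk_lt; lia.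
Qed.

Lemma sdseq_split n : size s = n.+1 ->
  exists xs ys, [/\ s = sdjoin (nth 0 s n) xs ys, size xs = nth 0 s n,
                    size ys = n - nth 0 s n, sdseq xs & sdseq ys].
Proof.
move=> size_s; set r := nth 0 s n.
have r_le : r <= n by apply: sdseq_nth_le; rewrite size_s.
set mid := drop r (take n s).
have mid_ge : all (fun y => r <= y) mid.
  apply/(all_nthP 0) => j; rewrite size_drop size_take size_s ltnS leqnn => j_lt.
  rewrite nth_drop nth_take; last by lia.
  by rewrite leqNgt; apply/negP => /(sdseq_lt_last_index size_s); lia.
have size_head : size (take r s) = r by rewrite size_takel // size_s; lia.
have head_lt : all (fun y => y < r) (take r s).
  have count_n : count (fun y => y < r) (take n s) = r.
    by apply: sdseq_count_take; rewrite size_s.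
  have mid_count : count (fun y => y < r) mid = 0.
    apply/eqP; rewrite eqn0Ngt -has_count; apply/hasPn => y /(allP mid_ge).
    by rewrite -leqNgt.
  rewrite all_count size_head -[X in _ == X]count_n.
  by rewrite -(cat_take_drop r (take n s)) take_takel // count_cat mid_count addn0.
have s_cat : s = take r s ++ mid ++ [:: r].
  rewrite catA /mid -{1}(take_takel s r_le) cat_take_drop cats1 /r -take_nth ?size_s //.
  by rewrite -size_s take_size.
have mid_shift : map (addn r) (map (subn^~ r) mid) = mid.
  rewrite -map_comp -[RHS]map_id; apply/eq_in_map => y /(allP mid_ge) /=; lia.
exists (take r s), (map (subn^~ r) mid); split.
- by rewrite /sdjoin mid_shift.
- exact: size_head.
- by rewrite size_map /mid size_drop size_take size_s ltnS leqnn.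
- exact: sdseq_take.
move: sd_s; rewrite /sdseq {1}s_cat !sd_from_cat => /and3P[_ + _].
by rewrite -{1}mid_shift -(sd_from_shift [::] _ head_lt size_head) cats0.
Qed.

End SelfDescribingSeq.

Lemma sdseq_join r xs ys : size xs = r -> sdseq xs -> sdseq ys -> sdseq (sdjoin r xs ys).
Proof.
move=> size_xs sd_xs sd_ys; rewrite /sdseq /sdjoin !sd_from_cat.
have xs_lt : all (fun y => y < r) xs by rewrite -size_xs; exact: sdseq_lt_size.
have -> : sd_from xs (map (addn r) ys) = sdseq ys.
  by rewrite /sdseq -(sd_from_shift [::] ys xs_lt size_xs) cats0.
rewrite -/(sdseq xs) sd_xs sd_ys /= andbT count_cat count_map.
have -> : count (fun y => y < r) xs = r by apply/eqP; rewrite -{2}size_xs -all_count.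
rewrite (eq_count (a2 := pred0)) ?count_pred0 ?addn0 // => y /=; lia.
Qed.

Lemma size_sdjoin r xs ys : size (sdjoin r xs ys) = (size xs + size ys).+1.
Proof. by rewrite /sdjoin !size_cat size_map addn1 addnS. Qed.

Lemma nth_sdjoin_last r xs ys : nth 0 (sdjoin r xs ys) (size xs + size ys) = r.
Proof. by rewrite /sdjoin catA cats1 nth_rcons size_cat size_map ltnn eqxx. Qed.

Lemma sdjoin_inj r xs ys xs' ys' : size xs = size xs' ->
  sdjoin r xs ys = sdjoin r xs' ys' -> xs = xs' /\ ys = ys'.
Proof.
move=> size_eq /eqP; rewrite /sdjoin eqseq_cat // => /andP[/eqP -> tail_eq].
by move: tail_eq; rewrite !cats1 => /eqP/rcons_inj[]/(inj_map (@addnI r)).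
Qed.

Definition seq_of_ffun m (a : {ffun 'I_m -> 'I_m}) : seq nat :=
  [seq val (a i) | i <- enum 'I_m].

Definition ffun_of_seq m (s : seq nat) : {ffun 'I_m -> 'I_m} :=
  [ffun i : 'I_m => insubd i (nth 0 s i)].

Lemma size_seq_of_ffun m (a : {ffun 'I_m -> 'I_m}) : size (seq_of_ffun a) = m.
Proof. by rewrite size_map size_enum_ord. Qed.

Lemma nth_seq_of_ffun m (a : {ffun 'I_m -> 'I_m}) (i : 'I_m) :
  nth 0 (seq_of_ffun a) i = a i.
Proof. by rewrite (nth_map i) ?size_enum_ord // nth_ord_enum. Qed.

Lemma seq_of_ffun_inj m : injective (@seq_of_ffun m).
Proof.
move=> a b eq_ab; apply/ffunP => i; apply: val_inj.
by rewrite /= -!nth_seq_of_ffun eq_ab.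
Qed.

Lemma ffun_of_seqK m s : size s = m -> all (fun y => y < m) s ->
  seq_of_ffun (ffun_of_seq m s) = s.
Proof.
move=> size_s s_lt; apply: (@eq_from_nth _ 0); first by rewrite size_seq_of_ffun.
move=> j; rewrite size_seq_of_ffun => j_lt.
rewrite -[j]/(val (Ordinal j_lt)) nth_seq_of_ffun ffunE val_insubd /=.
by rewrite (all_nthP 0 s_lt) // size_s.
Qed.

Lemma card_lt_before m (a : {ffun 'I_m -> 'I_m}) (i : 'I_m) :
  #|[pred j : 'I_m | (j < i) && (a j < a i)]|
  = count (fun y => y < a i) (take i (seq_of_ffun a)).
Proof.
rewrite cardE /enum_mem size_filter -enumT /seq_of_ffun -map_take count_map.
rewrite -{1}(cat_take_drop i (enum 'I_m)) count_cat.
have [take_lt drop_ge] : {in take i (enum 'I_m), forall j : 'I_m, j < i}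
                         /\ {in drop i (enum 'I_m), forall j : 'I_m, i <= j}.
  split=> j /(map_f val); rewrite ?map_take ?map_drop val_enum_ord.
    by rewrite take_iota mem_iota /=; lia.
  by rewrite drop_iota mem_iota /=; lia.
rewrite [count _ (drop _ _)](eq_in_count (a2 := pred0)) ?count_pred0 ?addn0.
  by apply: eq_in_count => j /take_lt j_lt; rewrite !inE j_lt.
by move=> j /drop_ge; rewrite !inE ltnNge => ->.
Qed.

Lemma self_describingE n (a : {ffun 'I_n.+1 -> 'I_n.+1}) :
  self_describing a = sdseq (seq_of_ffun a).
Proof.
rewrite /sdseq sd_from_nth size_seq_of_ffun.
apply/forallP/allP => [sd_a k | sd_a i].
- rewrite mem_iota => k_lt; have := sd_a (Ordinal k_lt).
  by rewrite card_lt_before -[k]/(val (Ordinal k_lt)) nth_seq_of_ffun.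
- by rewrite card_lt_before -nth_seq_of_ffun; apply: sd_a; rewrite mem_iota /=.
Qed.

Lemma self_describing_inA n (a : {ffun 'I_n.+1 -> 'I_n.+1}) :
  self_describing a -> inA a.
Proof.
rewrite self_describingE => sd_a; apply/forallP => i.
by rewrite -nth_seq_of_ffun sdseq_nth_le // size_seq_of_ffun.
Qed.

Definition sd_ffuns m := [set a : {ffun 'I_m -> 'I_m} | sdseq (seq_of_ffun a)].

Definition sd_ffuns_last n r :=
  [set a : {ffun 'I_n.+1 -> 'I_n.+1} |
     sdseq (seq_of_ffun a) && (nat_of_ord (a ord_max) == r)].

Section SplitAtLast.

Variables n r : nat.
Hypothesis r_le : r <= n.

Definition join_ffun (p : {ffun 'I_r -> 'I_r} * {ffun 'I_(n - r) -> 'I_(n - r)}) :=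
  ffun_of_seq n.+1 (sdjoin r (seq_of_ffun p.1) (seq_of_ffun p.2)).

Lemma seq_of_join_ffun p : p \in setX (sd_ffuns r) (sd_ffuns (n - r)) ->
  seq_of_ffun (join_ffun p) = sdjoin r (seq_of_ffun p.1) (seq_of_ffun p.2).
Proof.
case: p => x y; rewrite !inE /= => /andP[sd_x sd_y].
have sd_join := sdseq_join (size_seq_of_ffun x) sd_x sd_y.
have size_join : size (sdjoin r (seq_of_ffun x) (seq_of_ffun y)) = n.+1.
  by rewrite size_sdjoin !size_seq_of_ffun; lia.
by rewrite ffun_of_seqK // -[in X in all X]size_join; apply: sdseq_lt_size.
Qed.

Lemma join_ffun_inj : {in setX (sd_ffuns r) (sd_ffuns (n - r)) &, injective join_ffun}.
Proof.
move=> [x y] [x' y'] p_in p'_in /(congr1 (@seq_of_ffun n.+1)).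
rewrite !seq_of_join_ffun // => eq_join.
have [] := sdjoin_inj _ eq_join; first by rewrite !size_seq_of_ffun.
by move=> /= /seq_of_ffun_inj -> /seq_of_ffun_inj ->.
Qed.

Lemma sd_ffuns_last_imset :
  sd_ffuns_last n r = join_ffun @: setX (sd_ffuns r) (sd_ffuns (n - r)).
Proof.
apply/setP => a; rewrite inE; apply/idP/imsetP => [/andP[sd_a /eqP a_last] | ].
  have [xs [ys [a_split size_xs size_ys sd_xs sd_ys]]] :=
    sdseq_split sd_a (size_seq_of_ffun a).
  rewrite (nth_seq_of_ffun a ord_max) a_last in a_split size_xs size_ys.
  have xs_K : seq_of_ffun (ffun_of_seq r xs) = xs.
    by rewrite ffun_of_seqK // -{1}size_xs; apply: sdseq_lt_size.
  have ys_K : seq_of_ffun (ffun_of_seq (n - r) ys) = ys.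
    by rewrite ffun_of_seqK // -{1}size_ys; apply: sdseq_lt_size.
  have p_in : (ffun_of_seq r xs, ffun_of_seq (n - r) ys) \in
              setX (sd_ffuns r) (sd_ffuns (n - r)).
    by rewrite !inE /= xs_K ys_K sd_xs sd_ys.
  exists (ffun_of_seq r xs, ffun_of_seq (n - r) ys) => //.
  by apply: seq_of_ffun_inj; rewrite seq_of_join_ffun //= xs_K ys_K.
move=> [[x y] p_in ->]; have := seq_of_join_ffun p_in.
move: p_in; rewrite !inE /= => /andP[sd_x sd_y] ->.
rewrite sdseq_join ?size_seq_of_ffun //= -(nth_seq_of_ffun _ ord_max).
rewrite seq_of_join_ffun ?inE /= ?sd_x ?sd_y //.
rewrite [X in nth 0 _ X](_ : _ = size (seq_of_ffun x) + size (seq_of_ffun y)).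
  by rewrite nth_sdjoin_last.
by rewrite !size_seq_of_ffun /=; lia.
Qed.

Lemma card_sd_ffuns_last : #|sd_ffuns_last n r| = #|sd_ffuns r| * #|sd_ffuns (n - r)|.
Proof. by rewrite sd_ffuns_last_imset (card_in_imset join_ffun_inj) cardsX. Qed.

End SplitAtLast.

Lemma card_sd_ffuns_succ n :
  #|sd_ffuns n.+1| = \sum_(r < n.+1) #|sd_ffuns_last n r|.
Proof.
rewrite -sum1_card.
rewrite (partition_big (fun a : {ffun 'I_n.+1 -> 'I_n.+1} => a ord_max) xpredT) //=.
by apply: eq_bigr => r _; rewrite -sum1_card; apply: eq_bigl => a; rewrite !inE.
Qed.

Lemma card_sd_ffuns m : #|sd_ffuns m| = catalan m.
Proof.
elim/ltn_ind: m => -[|n] IHm.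
  rewrite (_ : sd_ffuns 0 = setT) ?cardsT ?card_ffun ?card_ord //.
  by apply/setP => a; rewrite !inE /seq_of_ffun enum_ord0.
rewrite card_sd_ffuns_succ -catalan_conv_succ; apply: eq_bigr => r _.
have r_le : r <= n by rewrite -ltnS.
by rewrite card_sd_ffuns_last // !IHm //; lia.
Qed.

Lemma inA_self_describingE n (a : {ffun 'I_n.+1 -> 'I_n.+1}) :
  inA a && self_describing a = sdseq (seq_of_ffun a).
Proof.
rewrite -self_describingE.
by case sd_a: (self_describing a); rewrite ?andbF ?(self_describing_inA sd_a).
Qed.

Theorem theorem3 (n : nat) :
  #|[set a : {ffun 'I_n.+1 -> 'I_n.+1} | inA a && self_describing a]| = catalan n.+1
  /\ forall r : nat, (r <= n)%N ->
     #|[set a : {ffun 'I_n.+1 -> 'I_n.+1} |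
          [&& inA a, self_describing a & nat_of_ord (a ord_max) == r]]|
       = catalan r * catalan (n - r).
Proof.
split=> [|r r_le].
  by rewrite -card_sd_ffuns; apply: eq_card => a; rewrite !inE inA_self_describingE.
rewrite -!card_sd_ffuns -card_sd_ffuns_last //.
by apply: eq_card => a; rewrite !inE andbA inA_self_describingE.
Qed.
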